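(* Let $r\ge 3$ be an integer and $p\ge 5$ an odd prime. Let $\mathbb{K}_1=\mathbb{Q}(\zeta_{2^r}+\zeta_{2^r}^{-1})$, $e_0=1$, $e_i=\zeta_{2^r}^i+\zeta_{2^r}^{-i}$ for $i\ge1$, $n_1=2^{r-2}$; let $\mathbb{K}_2=\mathbb{Q}(\zeta_p+\zeta_p^{-1})$, $b_j=\zeta_p^j+\zeta_p^{-j}$ for $j\ge 1$, $n_2=\frac{p-1}{2}$. Let $\mathbb{K}=\mathbb{K}_1\mathbb{K}_2$ be the compositum, $n=n_1n_2=[\mathbb{K}:\mathbb{Q}]$, and let $\mathcal{I}\subseteq\mathcal{O}_{\mathbb{K}}$ be the $\mathbb{Z}$-module with $\mathbb{Z}$-basis $$\gamma=\{e_0b_1,e_0b_2,\dots,e_0b_{n_2-1},\,2e_0b_{n_2},\;e_1b_1,\dots,e_1b_{n_2},\;\dots,\;e_{n_1-1}b_1,\dots,e_{n_1-1}b_{n_2}\},$$ i.e. all products $e_ib_j$ ($0\le i\le n_1-1$, $1\le j\le n_2$) except that $e_0b_{n_2}$ is replaced by $2e_0b_{n_2}$. Let $\alpha=(2-e_1)(2-b_1)$. Then the lattice $\frac{1}{\sqrt{2^{r-1}p}}\,\sigma_\alpha(\mathcal{I})\subseteq\mathbb{R}^n$ is a rotated $D_n$-lattice.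
   Context: $\zeta_m=e^{2\pi i/m}$. $\mathbb{K}$ is totally real Galois with Galois group $\{\sigma_1,\dots,\sigma_n\}$; $\alpha$ is totally positive. The twisted homomorphism is $\sigma_\alpha(x)=(\sqrt{\sigma_1(\alpha)}\sigma_1(x),\dots,\sqrt{\sigma_n(\alpha)}\sigma_n(x))\in\mathbb{R}^n$. $D_n=\{(x_1,\dots,x_n)\in\mathbb{Z}^n:\sum x_i \text{ even}\}$. A lattice $\Lambda\subseteq\mathbb{R}^n$ is a rotated $D_n$-lattice if $\Lambda=R(D_n)$ for some orthogonal linear map $R$ of $\mathbb{R}^n$. *)

From HB Require Import structures.
From mathcomp Require Import all_boot all_order all_algebra.
From mathcomp Require Import all_classical all_reals all_analysis.
Set Implicit Arguments. Unset Strict Implicit. Unset Printing Implicit Defensive.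
Import Order.TTheory GRing.Theory Num.Theory.
Local Open Scope ring_scope.

(* The Galois group of K is Gal(K1) x Gal(K2); its elements are indexed by
   (s, t) with s < 2^(r-2), t < (p-1)/2, acting by
     zeta_{2^r} |-> zeta_{2^r}^(2s+1),  zeta_p |-> zeta_p^(t+1). *)

(* sigma_{s}(e_i): e_0 = 1, e_i = zeta^i + zeta^-i = 2 cos(2 pi i/2^r). *)
Definition emb_e (R : realType) (r s i : nat) : R :=
  if i == 0%N then 1
  else 2 * cos (2 * pi * (((2 * s + 1) * i)%N)%:R / (2 ^ r)%:R).

Definition emb_b (R : realType) (p t j : nat) : R :=
  2 * cos (2 * pi * (((t + 1) * j)%N)%:R / p%:R).

Definition emb_alpha (R : realType) (r p s t : nat) : R :=
  (2 - emb_e R r s 1) * (2 - emb_b R p t 1).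

(* the basis element gamma_{i,j} = e_i b_{j+1} (i < n1, j < n2), except
   gamma_{0,n2-1} = 2 e_0 b_{n2}. *)
Definition gamma_coef (R : realType) (n2 i j : nat) : R :=
  if (i == 0%N) && (j.+1 == n2) then 2 else 1.

Definition sigma_alpha_gamma (R : realType) (r p : nat)
    (i : 'I_(2 ^ (r - 2))) (j : 'I_((p - 1) %/ 2)) : 'rV[R]_(2 ^ (r - 2) * ((p - 1) %/ 2)) :=
  mxvec (\matrix_(s < 2 ^ (r - 2), t < (p - 1) %/ 2)
           (Num.sqrt (emb_alpha R r p s t) *
            (gamma_coef R ((p - 1) %/ 2) i j * emb_e R r s i * emb_b R p t j.+1))).

Definition scaled_lattice (R : realType) (r p : nat)
    (v : 'rV[R]_(2 ^ (r - 2) * ((p - 1) %/ 2))) : Prop :=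
  exists k : 'M[int]_(2 ^ (r - 2), (p - 1) %/ 2),
    v = (Num.sqrt (((2 ^ (r - 1) * p)%N)%:R))^-1 *:
        \sum_(i < 2 ^ (r - 2)) \sum_(j < (p - 1) %/ 2)
           (k i j)%:~R *: @sigma_alpha_gamma R r p i j.

Definition Dn (n : nat) (d : 'rV[int]_n) : Prop := (2 %| \sum_(i < n) d 0 i)%Z.

(* L is a rotated D_n-lattice: L = Q(D_n) for an orthogonal Q
   (row-vector convention: x |-> x *m Q). *)
Definition rotated_Dn (R : realType) (n : nat) (L : 'rV[R]_n -> Prop) : Prop :=
  exists Q : 'M[R]_n, Q *m Q^T = 1%:M /\
    forall v, L v <-> exists d, Dn d /\ v = map_mx intr d *m Q.

From HB Require Import structures.
From mathcomp Require Import all_boot all_order all_algebra.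
From mathcomp Require Import all_classical all_reals all_analysis.
From mathcomp Require Import ring lra zify.
Set Implicit Arguments. Unset Strict Implicit. Unset Printing Implicit Defensive.
Import Order.TTheory GRing.Theory Num.Theory.
Local Open Scope ring_scope.

(* With
   y = (2s+1) pi / 2^r and z = (t+1) pi / p we have 2 - e_1 = (2 sin y)^2 and
   2 - b_1 = (2 sin z)^2, and the products sqrt(2 - e_1) e_i, sqrt(2 - b_1) b_(j+1)
   telescope into differences of the sines 2 sin((2k+1) y) and 2 sin((2l+1) z).
   These sines are the entries of the DST-IV matrix G and the DST-VII matrix F,
   with G G^T = 2^(r-1) and F F^T = p.  Hence, up to sign, the coordinates of
   sigma_alpha(sum_ij c_ij gamma_ij) are G^T (Delta^T C Delta^T) F, where C is the
   coefficient matrix with its corner entry doubled and Delta is the unimodular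
   bidiagonal difference matrix; after scaling, X |-> G^T X F is orthogonal.
   Finally the entry sum of Delta^T C Delta^T is the corner entry of C, so these
   matrices are exactly the integer matrices with even entry sum, i.e. D_n. *)

Lemma tr_mulmx3E (T : pzRingType) k l m n
    (A : 'M[T]_(k, m)) (C : 'M[T]_(k, l)) (B : 'M[T]_(l, n)) i j :
  (A^T *m C *m B) i j = \sum_a \sum_b A a i * C a b * B b j.
Proof.
rewrite mxE; under eq_bigr do rewrite mxE big_distrl /=.
by rewrite exchange_big; apply: eq_bigr => a _; apply: eq_bigr => b _; rewrite !mxE.
Qed.

Lemma sum_tr_mulmx3 (T : comPzRingType) k l m n
    (A : 'M[T]_(k, m)) (C : 'M[T]_(k, l)) (B : 'M[T]_(l, n)) :
  \sum_i \sum_j (A^T *m C *m B) i j =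
  \sum_a \sum_b (\sum_i A a i) * C a b * (\sum_j B b j).
Proof.
pose one p : 'cV[T]_p := const_mx 1.
have sumE p q (M : 'M[T]_(p, q)) : \sum_i \sum_j M i j = ((one p)^T *m M *m one q) 0 0.
  by rewrite tr_mulmx3E; do 2!apply: eq_bigr => ? _; rewrite !mxE mul1r mulr1.
rewrite sumE; have -> : (one m)^T *m (A^T *m C *m B) *m one n =
    (A *m one m)^T *m C *m (B *m one n) by rewrite trmx_mul !mulmxA.
rewrite tr_mulmx3E.
by do 2!apply: eq_bigr => ? _; rewrite !mxE; congr (_ * _ * _);
  apply: eq_bigr => ? _; rewrite mxE mulr1.
Qed.

Lemma sum_mxvec (T : nmodType) m n (A : 'M[T]_(m, n)) :
  \sum_x mxvec A 0 x = \sum_i \sum_j A i j.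
Proof.
rewrite (reindex (uncurry (@mxvec_index m n))) /=; last exact: curry_mxvec_bij.
by rewrite pair_big; apply: eq_bigr => -[i j] _ /=; rewrite mxvecE.
Qed.

Section DifferenceMatrix.
Variable T : pzRingType.

Definition diff_mx n : 'M[T]_n := \matrix_(i, k) ((i == k :> nat)%:R - (k.+1 == i :> nat)%:R).

Lemma sum_eqn_natr_mul n (f : nat -> T) (j : nat) :
  \sum_(k < n) (k == j :> nat)%:R * f k = (j < n)%:R * f j.
Proof.
have [jn|nj] := ltnP j n.
  rewrite (bigD1 (Ordinal jn)) //= eqxx mul1r big1 ?addr0 ?mul1r // => k.
  by rewrite -val_eqE /= => /negbTE ->; rewrite mul0r.
rewrite big1 ?mul0r // => k _.
by rewrite ltn_eqF ?mul0r // (leq_trans (ltn_ord k) nj).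
Qed.

Lemma sum_eqn_natr n (j : nat) : \sum_(k < n) (k == j :> nat)%:R = (j < n)%:R :> T.
Proof.
rewrite -[RHS]mulr1 -(sum_eqn_natr_mul n (fun=> 1)).
by apply: eq_bigr => k _; rewrite mulr1.
Qed.

Lemma mul_diff_mx m n (f : nat -> 'I_m -> T) :
  diff_mx n *m \matrix_(k, s) f k s =
  \matrix_(i, s) (f i s - if (i : nat) is i'.+1 then f i' s else 0).
Proof.
apply/matrixP => i s; rewrite !mxE.
under eq_bigr do rewrite !mxE mulrBl.
rewrite sumrB; under eq_bigr do rewrite eq_sym.
rewrite (sum_eqn_natr_mul _ (f^~ s)) ltn_ord mul1r; congr (_ - _).
case: i => -[|i] ilt /=; first by rewrite big1 // => k _; rewrite mul0r.
under eq_bigr do rewrite eqSS.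
by rewrite (sum_eqn_natr_mul _ (f^~ s)) ltnW // mul1r.
Qed.

Lemma mul_tr_diff_mx m n (f : nat -> 'I_m -> T) : (forall s, f n s = 0) ->
  (diff_mx n)^T *m \matrix_(k, t) f k t = \matrix_(j, t) (f j t - f j.+1 t).
Proof.
move=> fn0; apply/matrixP => j t; rewrite !mxE.
under eq_bigr do rewrite !mxE mulrBl.
rewrite sumrB; under [X in _ - X]eq_bigr do rewrite eq_sym.
rewrite !(sum_eqn_natr_mul _ (f^~ t)) ltn_ord mul1r; congr (_ - _).
have := ltn_ord j; rewrite leq_eqVlt => /orP[/eqP jn|jn]; last by rewrite jn mul1r.
by rewrite jn ltnn mul0r fn0.
Qed.

Lemma diff_mx_sum_row n (i : 'I_n) : \sum_k diff_mx n i k = (i == 0 :> nat)%:R.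
Proof.
under eq_bigr do rewrite mxE eq_sym.
rewrite sumrB sum_eqn_natr ltn_ord; case: i => -[|i] ilt /=.
  by rewrite big1 ?subr0.
by under eq_bigr do rewrite eqSS; rewrite sum_eqn_natr ltnW // subrr.
Qed.

Lemma diff_mx_sum_col n (j : 'I_n) : \sum_k diff_mx n k j = (j.+1 == n)%:R.
Proof.
under eq_bigr do rewrite mxE.
rewrite sumrB; under [X in _ - X]eq_bigr do rewrite eq_sym.
rewrite !sum_eqn_natr ltn_ord.
have := ltn_ord j; rewrite leq_eqVlt => /orP[/eqP jn|jn]; last by rewrite jn ltn_eqF ?subrr.
by rewrite jn ltnn eqxx subr0.
Qed.

End DifferenceMatrix.

Lemma diff_mx_unit n : diff_mx int n \in unitmx.
Proof.
rewrite unitmxE det_trig; last first.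
  apply/is_trig_mxP => i k ik; rewrite mxE.
  by rewrite (ltn_eqF ik) gtn_eqF ?subrr // (ltn_trans ik).
rewrite big1 ?unitr1 // => i _.
by rewrite mxE eqxx (gtn_eqF (ltnSn i)) subr0.
Qed.

Lemma map_diff_mx (T : pzRingType) n : map_mx intr (diff_mx int n) = diff_mx T n.
Proof. by apply/matrixP => i k; rewrite !mxE rmorphB /= !rmorph_nat. Qed.

Section KroneckerProduct.
Variable T : comPzRingType.

(* Indexed by [mxvec_index], unlike [tensmx] of real_closed, so that it acts on
   [mxvec] by [mul_mxvec_kronmx]. *)
Definition kronmx m1 n1 m2 n2 (A : 'M[T]_(m1, n1)) (B : 'M[T]_(m2, n2)) :
  'M[T]_(m1 * m2, n1 * n2) := lin_mx (mulmxr B \o mulmx A^T).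

Lemma mul_mxvec_kronmx m1 n1 m2 n2 (A : 'M[T]_(m1, n1)) (B : 'M[T]_(m2, n2)) D :
  mxvec D *m kronmx A B = mxvec (A^T *m D *m B).
Proof. exact: mul_vec_lin. Qed.

Lemma kronmxE m1 n1 m2 n2 (A : 'M[T]_(m1, n1)) (B : 'M[T]_(m2, n2)) i j k l :
  kronmx A B (mxvec_index i j) (mxvec_index k l) = A i k * B j l.
Proof.
have -> : kronmx A B (mxvec_index i j) (mxvec_index k l) =
  row (mxvec_index i j) (kronmx A B) 0 (mxvec_index k l) by rewrite [RHS]mxE.
rewrite rowE mul_rV_lin /= vec_mx_delta mxvecE.
by rewrite -(mul_delta_mx (0 : 'I_1)) mulmxA -colE -mulmxA -rowE mxE big_ord1 !mxE.
Qed.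

Lemma trmx_kronmx m1 n1 m2 n2 (A : 'M[T]_(m1, n1)) (B : 'M[T]_(m2, n2)) :
  (kronmx A B)^T = kronmx A^T B^T.
Proof.
apply/matrixP => x y; case/mxvec_indexP: x => k l; case/mxvec_indexP: y => i j.
by rewrite mxE !kronmxE !mxE.
Qed.

Lemma kronmx_mul m1 n1 p1 m2 n2 p2 (A : 'M[T]_(m1, n1)) (A' : 'M[T]_(n1, p1))
    (B : 'M[T]_(m2, n2)) (B' : 'M[T]_(n2, p2)) :
  kronmx A B *m kronmx A' B' = kronmx (A *m A') (B *m B').
Proof.
apply/row_matrixP => x; rewrite !rowE mulmxA !mul_rV_lin /= mxvecK.
by rewrite trmx_mul !mulmxA.
Qed.

Lemma kronmx_scalar n1 n2 (a b : T) : @kronmx n1 n1 n2 n2 a%:M b%:M = (a * b)%:M.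
Proof.
apply/row_matrixP => x; rewrite !rowE mul_rV_lin /= tr_scalar_mx mul_scalar_mx.
by rewrite mul_mx_scalar scalerA linearZ /= vec_mxK mul_mx_scalar mulrC.
Qed.

End KroneckerProduct.

(* Coefficient matrices of the basis gamma: column j stands for b_(j+1), and the
   corner (0, n2 - 1) carries the doubled element 2 e_0 b_(n2). *)
Section DoubledCorner.
Variables n1 n2 : nat.

Definition is_corner (i j : nat) : bool := (i == 0%N) && (j.+1 == n2).

Definition double_corner (k : 'M[int]_(n1, n2)) : 'M[int]_(n1, n2) :=
  \matrix_(i, j) (if is_corner i j then 2 * k i j else k i j).

Lemma sum_diff_mx_conj (C : 'M[int]_(n1, n2)) :
  \sum_i \sum_j ((diff_mx int n1)^T *m C *m (diff_mx int n2)^T) i j =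
  \sum_(i < n1) \sum_(j < n2) (if is_corner i j then C i j else 0).
Proof.
rewrite sum_tr_mulmx3; apply: eq_bigr => i _; apply: eq_bigr => j _.
under [X in _ * X]eq_bigr do rewrite mxE.
rewrite diff_mx_sum_row diff_mx_sum_col /is_corner.
by case: (_ == _); case: (_ == _); rewrite ?mul1r ?mulr1 ?mul0r ?mulr0.
Qed.

Lemma sum_is_corner (C : 'M[int]_(n1, n2)) (i : 'I_n1) (j : 'I_n2) : is_corner i j ->
  \sum_(i' < n1) \sum_(j' < n2) (if is_corner i' j' then C i' j' else 0) = C i j.
Proof.
move=> /andP[/eqP i0 /eqP j1].
have cornerE (i' : 'I_n1) (j' : 'I_n2) : is_corner i' j' = (i' == i) && (j' == j).
  by rewrite /is_corner -!val_eqE /= i0; congr andb; rewrite -[X in _ == X]j1 eqSS.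
rewrite (bigD1 i) //= [X in _ + X]big1 ?addr0 => [|i' /negbTE i'i]; last first.
  by apply: big1 => j' _; rewrite cornerE i'i.
rewrite (bigD1 j) //= cornerE !eqxx [X in _ + X]big1 ?addr0 // => j' /negbTE j'j.
by rewrite cornerE j'j andbF.
Qed.

Lemma even_sum_diff_mx_conjP (D : 'M[int]_(n1, n2)) :
  (2 %| \sum_i \sum_j D i j)%Z <->
  exists k, D = (diff_mx int n1)^T *m double_corner k *m (diff_mx int n2)^T.
Proof.
split=> [D_even|[k ->]]; last first.
  rewrite sum_diff_mx_conj; apply: rpred_sum => i _; apply: rpred_sum => j _.
  by rewrite mxE; case: ifP => // ->; apply: dvdz_mulr; apply: dvdzz.
have diffT_unit m : (diff_mx int m)^T \in unitmx by rewrite unitmx_tr diff_mx_unit.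
have [C DE] : exists C, D = (diff_mx int n1)^T *m C *m (diff_mx int n2)^T.
  exists (invmx (diff_mx int n1)^T *m D *m invmx (diff_mx int n2)^T).
  by rewrite !mulmxA mulmxV // mul1mx -mulmxA mulVmx // mulmx1.
have C_even (i : 'I_n1) (j : 'I_n2) : is_corner i j -> (2 %| C i j)%Z.
  by move=> ij; rewrite -(sum_is_corner C ij) -sum_diff_mx_conj -DE.
exists (\matrix_(i, j) if is_corner i j then (C i j %/ 2)%Z else C i j).
rewrite DE; congr (_ *m _ *m _); apply/matrixP => i j; rewrite !mxE.
by case: ifP => ij; rewrite ij // mulrC divzK // C_even.
Qed.

End DoubledCorner.

Section Trigonometry.
Variable R : realType.
Implicit Types x y : R.

Lemma sin_natr_mulpi (n : nat) : sin (n%:R * pi) = 0 :> R.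
Proof.
by rewrite mulr_natl -[pi *+ n]add0r (alternatingn (@sinDpi R)) sin0 mulr0.
Qed.

Lemma sin_natrB_mulpi (a b : nat) : sin ((a%:R - b%:R) * pi) = 0 :> R.
Proof. by rewrite mulrBl sinB !sin_natr_mulpi !mul0r mulr0 subrr. Qed.

Lemma sin_natr_divpi_gt0 (c M : nat) : (0 < c < M)%N -> 0 < sin (c%:R * (pi / M%:R)) :> R.
Proof.
case/andP=> c0 cM; have M0 : 0 < M%:R :> R by rewrite ltr0n (ltn_trans c0 cM).
apply: sin_gt0_pi; apply/andP; split.
  by apply: mulr_gt0; [rewrite ltr0n | apply: divr_gt0; [exact: pi_gt0 | ]].
by rewrite mulrA ltr_pdivrMr // mulrC ltr_pM2l ?pi_gt0 ?ltr_nat.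
Qed.

Lemma sin_natrB_divpi_neq0 (a b M : nat) : a != b -> (a < M)%N -> (b < M)%N ->
  sin ((a%:R - b%:R) * (pi / M%:R)) != 0 :> R.
Proof.
wlog ab : a b / (b < a)%N => [wlog_ab|_ aM _].
  rewrite neq_ltn => /orP[ab|ba] aM bM; last by rewrite wlog_ab // gtn_eqF.
  by rewrite -opprB mulNr sinN oppr_eq0 wlog_ab // gtn_eqF.
rewrite -natrB; last exact: ltnW.
by rewrite gt_eqF // sin_natr_divpi_gt0 // subn_gt0 ab (leq_ltn_trans (leq_subr _ _)).
Qed.

Lemma sin_mul_cos x y : 2 * sin x * (2 * cos y) = 2 * sin (y + x) - 2 * sin (y - x).
Proof. rewrite sinD sinB; ring. Qed.

Lemma sin_mul_sin x y : 2 * sin x * (2 * sin y) = 2 * cos (x - y) - 2 * cos (x + y).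
Proof. rewrite cosB cosD; ring. Qed.

Lemma sqrt_2B2cos_mul2 y : 0 <= sin y -> Num.sqrt (2 - 2 * cos (2 * y)) = 2 * sin y.
Proof.
move=> sy; have -> : 2 - 2 * cos (2 * y) = (2 * sin y) ^+ 2.
  have -> : 2 * y = y *+ 2 by rewrite mulr_natl.
  by rewrite cos_mulr2n cos2sin2; ring.
by rewrite sqrtr_sqr ger0_norm ?mulr_ge0.
Qed.

(* Telescoping: [2 sin y cos ((a + 2i) y)] is the difference of two sines. *)
Lemma sum_sin_mul_cos y (a N : nat) :
  \sum_(i < N) 2 * sin y * cos ((a + 2 * i)%:R * y) =
  sin ((a + 2 * N)%:R * y - y) - sin (a%:R * y - y).
Proof.
rewrite -(big_mkord xpredT (fun i => 2 * sin y * cos ((a + 2 * i)%:R * y))).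
have -> : sin (a%:R * y - y) = sin ((a + 2 * 0)%:R * y - y) by rewrite muln0 addn0.
rewrite -(telescope_sumr (fun i => sin ((a + 2 * i)%:R * y - y))) //.
apply: eq_bigr => i _.
have -> : (a + 2 * i.+1)%:R * y - y = (a + 2 * i)%:R * y + y by rewrite !natrD !natrM; ring.
rewrite sinD sinB; ring.
Qed.

Lemma sum_cos_odd_mul y (N : nat) : sin y != 0 -> sin ((2 * N)%:R * y) = 0 ->
  \sum_(s < N) cos ((2 * s + 1)%:R * y) = 0.
Proof.
move=> sy0 sNy; have := sum_sin_mul_cos y 1 N.
under eq_bigr do rewrite addnC.
rewrite -big_distrr /= mul1r subrr sin0 subr0.
have -> : (1 + 2 * N)%:R * y - y = (2 * N)%:R * y by rewrite natrD; ring.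
by rewrite sNy => /eqP; rewrite !mulf_eq0 (negbTE sy0) pnatr_eq0 /= => /eqP.
Qed.

Lemma sum_cos_even_mul y (N : nat) : sin y != 0 -> sin ((2 * N + 1)%:R * y) = 0 ->
  \sum_(t < N) cos ((2 * t + 2)%:R * y) = - 2^-1.
Proof.
move=> sy0 sNy; have := sum_sin_mul_cos y 2 N.
under eq_bigr do rewrite addnC.
have -> : (2 + 2 * N)%:R * y - y = (2 * N + 1)%:R * y by rewrite !natrD; ring.
have -> : 2%:R * y - y = y by ring.
rewrite sNy sub0r -big_distrr /= => sum2.
have s20 : 2 * sin y != 0 by rewrite mulf_eq0 negb_or sy0 pnatr_eq0.
by apply: (mulfI s20); rewrite sum2 mulrN mulrAC divff ?mul1r ?pnatr_eq0.
Qed.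

End Trigonometry.

Section DiscreteSineTransforms.
Variable R : realType.

Definition dst4 (N k s : nat) : R :=
  2 * sin (((2 * k + 1) * (2 * s + 1))%:R * (pi / (4 * N)%:R)).
Definition dst4_mx N : 'M[R]_N := \matrix_(k, s) dst4 N k s.

Definition dst7 (N l t : nat) : R :=
  2 * sin (((2 * l + 1) * (t + 1))%:R * (pi / (2 * N + 1)%:R)).
Definition dst7_mx N : 'M[R]_N := \matrix_(l, t) dst7 N l t.

Lemma dst7_last N t : dst7 N N t = 0.
Proof.
have N0 : (2 * N + 1)%:R != 0 :> R by rewrite pnatr_eq0 addn1.
rewrite /dst7; have -> :
    ((2 * N + 1) * (t + 1))%:R * (pi / (2 * N + 1)%:R) = (t + 1)%:R * pi :> R.
  by rewrite natrM; field.
by rewrite sin_natr_mulpi mulr0.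
Qed.

Lemma dst4_mx_orthogonal N : dst4_mx N *m (dst4_mx N)^T = (2 * N)%:R%:M.
Proof.
apply/matrixP => k k'; rewrite !mxE.
under eq_bigr do rewrite !mxE.
have [kN k'N] := (ltn_ord k, ltn_ord k').
have N0 : (0 < N)%N by apply: leq_ltn_trans kN.
pose w : R := pi / (4 * N)%:R.
have w4N : (4 * N)%:R * w = pi by rewrite mulrC divfK // pnatr_eq0 muln_eq0 -lt0n N0.
set y1 : R := ((2 * k)%:R - (2 * k')%:R) * w.
set y2 : R := (2 * (k + k' + 1))%:R * w.
have -> : \sum_(s < N) dst4 N k s * dst4 N k' s =
    2 * \sum_(s < N) cos ((2 * s + 1)%:R * y1) - 2 * \sum_(s < N) cos ((2 * s + 1)%:R * y2).
  rewrite !big_distrr -sumrB; apply: eq_bigr => s _.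
  rewrite sin_mul_sin -/w /y1 /y2; congr (2 * cos _ - 2 * cos _);
    rewrite ?natrM ?natrD ?natrM; ring.
have -> : \sum_(s < N) cos ((2 * s + 1)%:R * y2) = 0.
  apply: sum_cos_odd_mul; first by rewrite gt_eqF // sin_natr_divpi_gt0 //; lia.
  have -> : (2 * N)%:R * y2 = (k + k' + 1)%:R * ((4 * N)%:R * w) :> R.
    by rewrite /y2 !natrM; ring.
  by rewrite w4N sin_natr_mulpi.
have [kk'|kk'] := eqVneq k k'.
  rewrite /y1 kk' subrr mul0r; under eq_bigr do rewrite mulr0 cos0.
  by rewrite sumr_const card_ord mulr0 subr0 /= mulr1n natrM.
have -> : \sum_(s < N) cos ((2 * s + 1)%:R * y1) = 0.
  apply: sum_cos_odd_mul.
    by apply: sin_natrB_divpi_neq0; [rewrite eqn_pmul2l | lia | lia].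
  have -> : (2 * N)%:R * y1 = (k%:R - k'%:R) * ((4 * N)%:R * w) :> R.
    by rewrite /y1 !natrM; ring.
  by rewrite w4N sin_natrB_mulpi.
by rewrite mulr0 subrr.
Qed.

Lemma dst7_mx_orthogonal N : dst7_mx N *m (dst7_mx N)^T = (2 * N + 1)%:R%:M.
Proof.
apply/matrixP => l l'; rewrite !mxE.
have [lN l'N] := (ltn_ord l, ltn_ord l').
under eq_bigr do rewrite !mxE.
pose v : R := pi / (2 * N + 1)%:R.
have vN : (2 * N + 1)%:R * v = pi by rewrite mulrC divfK // pnatr_eq0 addn1.
set y1 : R := (l%:R - l'%:R) * v.
set y2 : R := (l + l' + 1)%:R * v.
have -> : \sum_(t < N) dst7 N l t * dst7 N l' t =
    2 * \sum_(t < N) cos ((2 * t + 2)%:R * y1) - 2 * \sum_(t < N) cos ((2 * t + 2)%:R * y2).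
  rewrite !big_distrr -sumrB; apply: eq_bigr => t _.
  rewrite sin_mul_sin -/v /y1 /y2; congr (2 * cos _ - 2 * cos _);
    rewrite ?natrM ?natrD ?natrM; ring.
have -> : \sum_(t < N) cos ((2 * t + 2)%:R * y2) = - 2^-1.
  apply: sum_cos_even_mul; first by rewrite gt_eqF // sin_natr_divpi_gt0 //; lia.
  have -> : (2 * N + 1)%:R * y2 = (l + l' + 1)%:R * ((2 * N + 1)%:R * v) :> R.
    by rewrite /y2; ring.
  by rewrite vN sin_natr_mulpi.
have [ll'|ll'] := eqVneq l l'.
  rewrite /y1 ll' subrr mul0r; under eq_bigr do rewrite mulr0 cos0.
  by rewrite sumr_const card_ord /= mulr1n natrD natrM; field.
have -> : \sum_(t < N) cos ((2 * t + 2)%:R * y1) = - 2^-1.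
  apply: sum_cos_even_mul; first by apply: sin_natrB_divpi_neq0 => //; lia.
  have -> : (2 * N + 1)%:R * y1 = (l%:R - l'%:R) * ((2 * N + 1)%:R * v) :> R.
    by rewrite /y1; ring.
  by rewrite vN sin_natrB_mulpi.
by rewrite subrr.
Qed.

End DiscreteSineTransforms.

Lemma odd_half_pred (p : nat) : odd p -> (2 * ((p - 1) %/ 2) + 1)%N = p.
Proof.
move=> p_odd; suff : (p %% 2 = 1)%N by lia.
by rewrite modn2 p_odd.
Qed.

Section Embeddings.
Variable R : realType.

Lemma sqrt2B_emb_e_mul r s i : (2 <= r)%N -> (s < 2 ^ (r - 2))%N ->
  Num.sqrt (2 - emb_e R r s 1) * emb_e R r s i =
  dst4 R (2 ^ (r - 2)) i s - if i is i'.+1 then dst4 R (2 ^ (r - 2)) i' s else 0.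
Proof.
move=> r2 sN; set N := (2 ^ (r - 2))%N.
have N4 : (2 ^ r = 4 * N)%N by rewrite /N -[4%N]/(2 ^ 2)%N -expnD subnKC.
pose y : R := (2 * s + 1)%:R * (pi / (4 * N)%:R).
have emb_eE j : emb_e R r s j.+1 = 2 * cos ((2 * j.+1)%:R * y).
  by rewrite /emb_e /= N4 /y !natrM; congr (2 * cos _); ring.
rewrite emb_eE sqrt_2B2cos_mul2 ?ltW ?sin_natr_divpi_gt0 //; last by rewrite addn1 /=; lia.
case: i => [|i]; first by rewrite /emb_e /dst4 /= mulr1 subr0 mul1n.
rewrite emb_eE sin_mul_cos /dst4; congr (2 * sin _ - 2 * sin _);
  rewrite /y !natrM ?natrD ?natrM; ring.
Qed.

Lemma sqrt2B_emb_b_mul p t j : odd p -> (t < (p - 1) %/ 2)%N ->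
  Num.sqrt (2 - emb_b R p t 1) * emb_b R p t j.+1 =
  dst7 R ((p - 1) %/ 2) j.+1 t - dst7 R ((p - 1) %/ 2) j t.
Proof.
move=> p_odd tN; set N := ((p - 1) %/ 2)%N.
have pE : p%:R = (2 * N + 1)%:R :> R by rewrite odd_half_pred.
pose y : R := (t + 1)%:R * (pi / (2 * N + 1)%:R).
have emb_bE l : emb_b R p t l = 2 * cos ((2 * l)%:R * y).
  by rewrite /emb_b pE /y !natrM; congr (2 * cos _); ring.
rewrite !emb_bE sqrt_2B2cos_mul2 ?ltW ?sin_natr_divpi_gt0 //; last by rewrite addn1 /=; lia.
rewrite sin_mul_cos /dst7; congr (2 * sin _ - 2 * sin _);
  rewrite /y !natrM ?natrD ?natrM; ring.
Qed.

Lemma sqrt_emb_alpha r p s t :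
  Num.sqrt (emb_alpha R r p s t) =
  Num.sqrt (2 - emb_e R r s 1) * Num.sqrt (2 - emb_b R p t 1).
Proof.
have ge0_2B2cos x : 0 <= 2 - 2 * cos x :> R by have := cos_le1 x; lra.
by rewrite /emb_alpha sqrtrM // /emb_e ge0_2B2cos.
Qed.

End Embeddings.

Section Rotation.
Variables (R : realType) (r p : nat).
Hypotheses (r2 : (2 <= r)%N) (p_odd : odd p).
Local Notation n1 := (2 ^ (r - 2))%N.
Local Notation n2 := ((p - 1) %/ 2)%N.

Definition lattice_scale : R := (Num.sqrt ((2 ^ (r - 1) * p)%N%:R))^-1.

Definition rotation_mx : 'M[R]_(n1 * n2) :=
  - lattice_scale *: kronmx (dst4_mx R n1) (dst7_mx R n2).

Lemma rotation_mx_orthogonal : rotation_mx *m rotation_mx^T = 1%:M.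
Proof.
rewrite /rotation_mx linearZ /= -scalemxAl -scalemxAr scalerA trmx_kronmx kronmx_mul.
rewrite dst4_mx_orthogonal dst7_mx_orthogonal kronmx_scalar scale_scalar_mx -natrM.
have -> : (2 * n1 * (2 * n2 + 1))%N = (2 ^ (r - 1) * p)%N.
  by rewrite odd_half_pred // -expnS; congr (2 ^ _ * _)%N; lia.
rewrite mulrNN -expr2 exprVn sqr_sqrtr ?ler0n // mulVf //.
by rewrite pnatr_eq0 muln_eq0 expn_eq0 /=; case: p p_odd.
Qed.

Lemma diff_mx_mul_dst4 :
  diff_mx R n1 *m dst4_mx R n1 =
  \matrix_(i, s) (Num.sqrt (2 - emb_e R r s 1) * emb_e R r s i).
Proof.
rewrite /dst4_mx (mul_diff_mx _ (fun k (s : 'I_n1) => dst4 R n1 k s)).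
by apply/matrixP => i s; rewrite !mxE sqrt2B_emb_e_mul.
Qed.

Lemma tr_diff_mx_mul_dst7 :
  (diff_mx R n2)^T *m dst7_mx R n2 =
  \matrix_(j, t) - (Num.sqrt (2 - emb_b R p t 1) * emb_b R p t j.+1).
Proof.
rewrite /dst7_mx (@mul_tr_diff_mx _ _ n2 (fun l (t : 'I_n2) => dst7 R n2 l t)) => [|t].
  by apply/matrixP => j t; rewrite !mxE sqrt2B_emb_b_mul // opprB.
exact: dst7_last.
Qed.

Lemma scaled_lattice_coords (k : 'M[int]_(n1, n2)) :
  lattice_scale *: \sum_(i < n1) \sum_(j < n2) (k i j)%:~R *: @sigma_alpha_gamma R r p i j =
  map_mx intr (mxvec ((diff_mx int n1)^T *m double_corner k *m (diff_mx int n2)^T))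
    *m rotation_mx.
Proof.
rewrite map_mxvec !map_mxM -!map_trmx !map_diff_mx -scalemxAr mul_mxvec_kronmx.
set C := map_mx intr (double_corner k).
have -> : (dst4_mx R n1)^T *m ((diff_mx R n1)^T *m C *m (diff_mx R n2)^T) *m dst7_mx R n2 =
    (diff_mx R n1 *m dst4_mx R n1)^T *m C *m ((diff_mx R n2)^T *m dst7_mx R n2).
  by rewrite trmx_mul !mulmxA.
rewrite diff_mx_mul_dst4 tr_diff_mx_mul_dst7.
apply/rowP => x; case/mxvec_indexP: x => s t.
rewrite !mxE mxvecE tr_mulmx3E mulNr -mulrN -sumrN !summxE.
congr (_ * _); apply: eq_bigr => i _; rewrite -sumrN summxE; apply: eq_bigr => j _.
rewrite !mxE mxvecE !mxE sqrt_emb_alpha /gamma_coef /double_corner /is_corner.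
by case: ifP => _; rewrite ?rmorphM /=; ring.
Qed.

End Rotation.

Theorem proposition3p4 (R : realType) (r p : nat) :
  (3 <= r)%N -> prime p -> (5 <= p)%N ->
  rotated_Dn (@scaled_lattice R r p).
Proof.
move=> r3 p_prime p5.
have r2 : (2 <= r)%N by exact: ltnW.
have p_odd : odd p by apply: contraLR p5 => /(prime_oddPn p_prime) ->.
exists (rotation_mx R r p); split; first exact: rotation_mx_orthogonal.
move=> v; split=> [[k ->]|[d [d_even ->]]].
  exists (mxvec ((diff_mx int _)^T *m double_corner k *m (diff_mx int _)^T)).
  split; last exact: scaled_lattice_coords.
  by rewrite /Dn sum_mxvec; apply/even_sum_diff_mx_conjP; exists k.
have /even_sum_diff_mx_conjP[k dE] : (2 %| \sum_i \sum_j vec_mx d i j)%Z.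
  by rewrite -sum_mxvec vec_mxK.
by exists k; rewrite scaled_lattice_coords // -dE vec_mxK.
Qed.
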